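(* Assume (H1) and (H2), and fix $\alpha_0>0$. Then for all $f_2,f_2^*\in\mathcal M$, $$\|W^{\alpha_0}(f_2)-W^{\alpha_0}(f_2^* )\|\le \widehat\varphi(\alpha_0)\,\|f_2-f_2^*\|,$$ where $\widehat\varphi(\alpha_0):=2L_{2M}\beta\,\alpha_0^{\beta}\,\bar F_2(\alpha_0)\exp\!\Big(\frac{aN_{2M}}{L_{2m}(\beta-\sigma-1)}\frac{1}{\alpha_0^{\beta-\sigma-2}}\Big)$.
   Context: Fix a constant $a>0$. For $\alpha_0>0$: $C_b[\alpha_0,\infty)$ is the Banach space of bounded continuous real functions on $[\alpha_0,\infty)$ with norm $\|f\|=\sup_{[\alpha_0,\infty)}|f|$, and $\mathcal M=\{f\in C_b[\alpha_0,\infty): f(\alpha_0)=0,\ \lim_{\xi\to\infty}f(\xi)=-1\}$. We are given maps $L^*,N^*$ assigning to each $f_2\in\mathcal M$ positive continuous functions $L^*(f_2),N^*(f_2)$ on $[\alpha_0,\infty)$. Define, for $\xi\ge\alpha_0$ (including $\xi=\infty$ as an improper integral): $E_2(\alpha_0,\xi,f_2)=\exp\big(-\alpha_0 a\int_{\alpha_0}^{\xi}\frac{N^*(f_2)(s)}{L^*(f_2)(s)}ds\big)$, $F_2(\alpha_0,\xi,f_2)=\int_{\alpha_0}^{\xi}\frac{E_2(\alpha_0,s,f_2)}{s\,L^*(f_2)(s)}ds$, and the operator $W^{\alpha_0}(f_2)(\xi)=-\frac{F_2(\alpha_0,\xi,f_2)}{F_2(\alpha_0,\infty,f_2)}$,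 $\xi\ge\alpha_0$. Hypothesis (H1) (the part used here): there are positive constants $\beta,\sigma,L_{2m},L_{2M},N_{2m},N_{2M}$ with $\beta>\sigma+2$ such that for all $\alpha_0>0$, all $f_2\in\mathcal M$ and all $\xi\ge\alpha_0$: $L_{2m}\xi^{\beta}\le L^*(f_2)(\xi)\le L_{2M}\xi^{\beta}$ and $N_{2m}\xi^{\sigma}\le N^*(f_2)(\xi)\le N_{2M}\xi^{\sigma}$. Hypothesis (H2) (the part used here): there are constants $\bar L_2,\bar N_2\ge0$ such that for all $\alpha_0>0$ and all $f_2,f_2^*\in\mathcal M$: $\sup_{s\ge\alpha_0}|L^*(f_2)(s)-L^*(f_2^* )(s)|\le\bar L_2\|f_2-f_2^*\|$ and $\sup_{s\ge\alpha_0}|N^*(f_2)(s)-N^*(f_2^* )(s)|\le\bar N_2\|f_2-f_2^*\|$. For $z>0$, $\bar F_2(z)=\frac{za}{\beta L_{2m}^2}\Big[\frac{\bar N_2}{\beta-1}\frac{1}{z^{\beta-1}}+\frac{\bar L_2N_{2M}}{L_{2m}(2\beta-\sigma-1)}\frac{1}{z^{2\beta-\sigma-1}}\Big]\frac{1}{z^{\beta}}+\frac{\bar L_2}{2\beta L_{2m}^2}\frac{1}{z^{2\beta}}$. *)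

From Stdlib Require Import Reals.
From Coquelicot Require Import Coquelicot.
Open Scope R_scope.

Definition contOn (a0 : R) (f : R -> R) : Prop :=
  forall x, a0 <= x ->
    filterlim f (within (fun y => a0 <= y) (locally x)) (locally (f x)).

Definition boundedOn (a0 : R) (f : R -> R) : Prop :=
  exists B, forall x, a0 <= x -> Rabs (f x) <= B.

Definition Cb (a0 : R) (f : R -> R) : Prop := contOn a0 f /\ boundedOn a0 f.

Definition inM (a0 : R) (f : R -> R) : Prop :=
  Cb a0 f /\ f a0 = 0 /\ filterlim f (Rbar_locally p_infty) (locally (-1)).

Definition supnorm (a0 : R) (f : R -> R) : R :=
  real (Lub_Rbar (fun y => exists x, a0 <= x /\ y = Rabs (f x))).

Section Ops.
Variables (a : R) (LS NS : (R -> R) -> (R -> R)).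

Definition E2 (a0 xi : R) (f2 : R -> R) : R :=
  exp (- (a0 * a * RInt (fun s => NS f2 s / LS f2 s) a0 xi)).

Definition F2 (a0 xi : R) (f2 : R -> R) : R :=
  RInt (fun s => E2 a0 s f2 / (s * LS f2 s)) a0 xi.

Definition F2inf (a0 : R) (f2 : R -> R) : R :=
  real (Lim (fun xi => F2 a0 xi f2) p_infty).

Definition W (a0 : R) (f2 : R -> R) (xi : R) : R :=
  - (F2 a0 xi f2 / F2inf a0 f2).
End Ops.

Definition barF2 (a beta sigma L2m N2M barL2 barN2 z : R) : R :=
  z * a / (beta * L2m ^ 2) *
    (barN2 / (beta - 1) * / Rpower z (beta - 1)
     + barL2 * N2M / (L2m * (2 * beta - sigma - 1)) * / Rpower z (2 * beta - sigma - 1))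
    * / Rpower z beta
  + barL2 / (2 * beta * L2m ^ 2) * / Rpower z (2 * beta).

Definition phihat (a beta sigma L2m L2M N2M barL2 barN2 a0 : R) : R :=
  2 * L2M * beta * Rpower a0 beta * barF2 a beta sigma L2m N2M barL2 barN2 a0
  * exp (a * N2M / (L2m * (beta - sigma - 1)) * / Rpower a0 (beta - sigma - 2)).

(* By (H1) the exponent integrand N/L decays
   like s^(sigma-beta), so the exponent stays below a constant K and E lies in
   [exp(-a0 a K), 1]; this bounds F(+oo) from below by exp(-a0 a K)/(L2M beta a0^beta).
   By (H2), the differences of N/L, of the exponent, of E (exp is 1-Lipschitz on (-oo, 0]) and
   of the integrand are bounded by integrable powers of s, which gives
   |F_1 - F_2| <= barF2(a0) ||f2 - f2*|| uniformly in xi and in the limit.  Finally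
   |F_1/l_1 - F_2/l_2| <= (|F_1 - F_2| + |l_1 - l_2|)/l_1 because 0 <= F_2 <= l_2. *)

From Stdlib Require Import Reals Lra Classical.
From Coquelicot Require Import Coquelicot.
Open Scope R_scope.

Lemma Rpower_pos x y : 0 < Rpower x y.
Proof. apply exp_pos. Qed.

Lemma continuous_Rpower p s : 0 < s -> continuous (fun t => Rpower t p) s.
Proof.
intros Hs. apply (ex_derive_continuous (K:=R_AbsRing) (V:=R_NormedModule)).
exists (p * Rpower s (p - 1)). apply is_derive_Reals, derivable_pt_lim_power, Hs.
Qed.

Lemma is_RInt_Rpower_tail p a0 x : 0 < p -> 0 < a0 -> a0 <= x ->
  is_RInt (fun s => Rpower s (-(p + 1))) a0 x ((/ Rpower a0 p - / Rpower x p) / p).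
Proof.
intros Hp Ha Hx.
pose proof (Rpower_pos a0 p); pose proof (Rpower_pos x p).
replace ((/ Rpower a0 p - / Rpower x p) / p)
  with (minus (- Rpower x (-p) / p) (- Rpower a0 (-p) / p))
  by (rewrite !Rpower_Ropp; unfold minus, plus, opp; simpl; field; lra).
apply (is_RInt_derive (V:=R_CompleteNormedModule) (fun s => - Rpower s (-p) / p));
  intros s Hs; rewrite Rmin_left, Rmax_right in Hs by lra.
- apply is_derive_Reals.
  replace (Rpower s (-(p + 1))) with (- (- p * Rpower s (-p - 1)) / p)
    by (replace (-p - 1) with (-(p + 1)) by ring; field; lra).
  apply derivable_pt_lim_div_scal, derivable_pt_lim_opp, derivable_pt_lim_power; lra.
- apply continuous_Rpower; lra.
Qed.

Lemma Rpower_tail_bounds p a0 x : 0 < p -> 0 < a0 -> a0 <= x ->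
  0 <= (/ Rpower a0 p - / Rpower x p) / p <= / (p * Rpower a0 p).
Proof.
intros Hp Ha Hx.
assert (Hle : Rpower a0 p <= Rpower x p) by (apply Rle_Rpower_l; lra).
pose proof (Rpower_pos a0 p); pose proof (Rpower_pos x p).
assert (/ Rpower x p <= / Rpower a0 p) by (apply Rinv_le_contravar; lra).
assert (0 < / Rpower x p) by (apply Rinv_0_lt_compat; lra).
rewrite Rinv_mult; unfold Rdiv; split.
- apply Rmult_le_pos; [lra | left; apply Rinv_0_lt_compat, Hp].
- rewrite Rmult_comm. apply Rmult_le_compat_l; [left; apply Rinv_0_lt_compat, Hp | lra].
Qed.

Lemma abs_RInt_le_is_RInt g h a b I : a <= b -> ex_RInt g a b -> is_RInt h a b I ->
  (forall s, a < s < b -> Rabs (g s) <= h s) -> Rabs (RInt g a b) <= I.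
Proof.
intros Hab Hg Hh Hgh.
assert (Hopp : is_RInt (fun s => - h s) a b (- I)) by exact (is_RInt_opp h a b I Hh).
apply Rabs_le; split.
- rewrite <- (is_RInt_unique _ _ _ _ Hopp).
  apply RInt_le; [exact Hab | eexists; exact Hopp | exact Hg |].
  intros s Hs. specialize (Hgh s Hs). apply Rabs_le_between in Hgh. lra.
- rewrite <- (is_RInt_unique _ _ _ _ Hh).
  apply RInt_le; [exact Hab | exact Hg | eexists; exact Hh |].
  intros s Hs. specialize (Hgh s Hs). apply Rabs_le_between in Hgh. lra.
Qed.

Lemma abs_RInt_le_Rpower_tails g a0 x c1 c2 p1 p2 :
  0 < p1 -> 0 < p2 -> 0 < a0 -> a0 <= x -> 0 <= c1 -> 0 <= c2 -> ex_RInt g a0 x ->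
  (forall s, a0 < s < x ->
     Rabs (g s) <= c1 * Rpower s (-(p1 + 1)) + c2 * Rpower s (-(p2 + 1))) ->
  Rabs (RInt g a0 x) <= c1 / (p1 * Rpower a0 p1) + c2 / (p2 * Rpower a0 p2).
Proof.
intros Hp1 Hp2 Ha Hx Hc1 Hc2 Hg Hbound.
set (T1 := (/ Rpower a0 p1 - / Rpower x p1) / p1).
set (T2 := (/ Rpower a0 p2 - / Rpower x p2) / p2).
eapply Rle_trans.
- apply (abs_RInt_le_is_RInt g
    (fun s => c1 * Rpower s (-(p1 + 1)) + c2 * Rpower s (-(p2 + 1))) a0 x (c1 * T1 + c2 * T2)
    Hx Hg); [|exact Hbound].
  apply (is_RInt_plus (fun s => c1 * Rpower s (-(p1 + 1))) (fun s => c2 * Rpower s (-(p2 + 1))));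
    apply (is_RInt_scal (fun s => Rpower s _)), is_RInt_Rpower_tail; assumption.
- destruct (Rpower_tail_bounds p1 a0 x) as [_ H1]; auto.
  destruct (Rpower_tail_bounds p2 a0 x) as [_ H2]; auto.
  unfold Rdiv. apply Rplus_le_compat; apply Rmult_le_compat_l; assumption.
Qed.

Lemma abs_RInt_le_Rpower_tail g a0 x c p :
  0 < p -> 0 < a0 -> a0 <= x -> 0 <= c -> ex_RInt g a0 x ->
  (forall s, a0 < s < x -> Rabs (g s) <= c * Rpower s (-(p + 1))) ->
  Rabs (RInt g a0 x) <= c / (p * Rpower a0 p).
Proof.
intros Hp Ha Hx Hc Hg Hbound.
rewrite <- (Rplus_0_r (c / _)), <- (Rmult_0_l (/ (1 * Rpower a0 1))).
apply abs_RInt_le_Rpower_tails; try lra; try assumption.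
intros s Hs. rewrite Rmult_0_l, Rplus_0_r. apply Hbound, Hs.
Qed.

Lemma is_lim_Rpower_neg p : 0 < p -> is_lim (fun x => Rpower x (-p)) p_infty 0.
Proof.
intros Hp. unfold Rpower.
apply (is_lim_comp exp (fun x => -p * ln x) p_infty 0 m_infty).
- exact is_lim_exp_m.
- assert (Hm : Rbar_mult (-p) p_infty = m_infty)
    by (simpl; case Rle_dec; [intros; exfalso; lra | reflexivity]).
  rewrite <- Hm. apply is_lim_scal_l, is_lim_ln_p.
- exists 0. discriminate.
Qed.

Lemma le_lim_of_Rpower_gap A c p l a0 : 0 < p ->
  (forall x, a0 <= x -> A - c * Rpower x (-p) <= l) -> A <= l.
Proof.
intros Hp Hgap.
assert (Hlim : is_lim (fun x => A - c * Rpower x (-p)) p_infty (A - c * 0)).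
{ apply (is_lim_minus (fun _ => A) (fun x => c * Rpower x (-p)) p_infty A (c * 0)).
  - apply is_lim_const.
  - apply (is_lim_scal_l _ c p_infty 0), is_lim_Rpower_neg, Hp.
  - easy. }
rewrite Rmult_0_r, Rminus_0_r in Hlim.
apply (is_lim_le_loc (fun x => A - c * Rpower x (-p)) (fun _ => l) p_infty A l);
  [| exact Hlim | apply is_lim_const].
exists a0. intros x Hx. apply Hgap. lra.
Qed.

Lemma abs_lim_minus_le h1 h2 (l1 l2 : R) a0 C :
  is_lim h1 p_infty l1 -> is_lim h2 p_infty l2 ->
  (forall x, a0 <= x -> Rabs (h1 x - h2 x) <= C) -> Rabs (l1 - l2) <= C.
Proof.
intros H1 H2 Hb.
assert (Hd : is_lim (fun x => Rabs (h1 x - h2 x)) p_infty (Rabs (l1 - l2))).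
{ apply (is_lim_Rabs _ _ (l1 - l2)), (is_lim_minus h1 h2 _ l1 l2); easy. }
apply (is_lim_le_loc (fun x => Rabs (h1 x - h2 x)) (fun _ => C) p_infty (Rabs (l1 - l2)) C);
  [| exact Hd | apply is_lim_const].
exists a0. intros x Hx. apply Hb. lra.
Qed.

Lemma is_lim_incr_bounded (h : R -> R) a0 U :
  (forall x y, a0 <= x -> x <= y -> h x <= h y) -> (forall x, a0 <= x -> h x <= U) ->
  exists l : R, is_lim h p_infty l /\ (forall x, a0 <= x -> h x <= l).
Proof.
intros Hmono Hbd.
set (E := fun y => exists x, a0 <= x /\ y = h x).
destruct (completeness E) as [l [Hub Hleast]].
{ exists U. intros y [x [Hx ->]]. auto. }
{ exists (h a0), a0. split; lra. }
assert (Hle : forall x, a0 <= x -> h x <= l) by (intros x Hx; apply Hub; exists x; auto).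
exists l. split; [| exact Hle].
apply is_lim_spec. intros eps. simpl.
assert (Hclose : exists x0, a0 <= x0 /\ l - eps < h x0).
{ apply NNPP. intros Hnone.
  assert (l <= l - eps).
  { apply Hleast. intros y [x [Hx ->]]. apply Rnot_lt_le. intros Hlt. apply Hnone. eauto. }
  destruct eps; simpl in *; lra. }
destruct Hclose as [x0 [Hx0 Hh]]. exists (Rmax a0 x0). intros y Hy.
pose proof (Rmax_l a0 x0); pose proof (Rmax_r a0 x0).
assert (h x0 <= h y) by (apply Hmono; lra).
assert (h y <= l) by (apply Hle; lra).
rewrite Rabs_left1 by lra. lra.
Qed.

Lemma exp_le_exp x y : x <= y -> exp x <= exp y.
Proof. intros [Hlt | ->]; [left; apply exp_increasing, Hlt | right; reflexivity]. Qed.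

Lemma exp_opp_lipschitz u v : 0 <= u -> 0 <= v -> Rabs (exp (-v) - exp (-u)) <= Rabs (v - u).
Proof.
intros Hu Hv.
destruct (MVT_abs (fun x => exp (-x)) (fun x => - exp (-x)) u v) as [c [Hc Hcuv]].
{ intros c _. apply is_derive_Reals. auto_derive; [exact I | ring]. }
rewrite Hc, Rabs_Ropp, Rabs_right by (left; apply exp_pos).
rewrite <- (Rmult_1_l (Rabs (v - u))) at 2.
apply Rmult_le_compat_r; [apply Rabs_pos |].
rewrite <- exp_0. apply exp_le_exp.
destruct (Rle_dec u v); [rewrite Rmin_left in Hcuv | rewrite Rmin_right in Hcuv]; lra.
Qed.

Lemma Rabs_div_le x l l0 c : 0 < l0 -> l0 <= l -> Rabs x <= c -> Rabs (x / l) <= c / l0.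
Proof.
intros H0 H1 H2. unfold Rdiv. rewrite Rabs_mult, Rabs_inv, (Rabs_right l) by lra.
apply Rmult_le_compat; auto; [apply Rabs_pos | left; apply Rinv_0_lt_compat; lra |].
apply Rinv_le_contravar; lra.
Qed.

Lemma Rabs_ratio_diff_le F G l1 l2 m C : 0 < m -> m <= l1 -> 0 < l2 -> 0 <= G <= l2 ->
  Rabs (F - G) <= C -> Rabs (l1 - l2) <= C -> Rabs (F / l1 - G / l2) <= 2 * C / m.
Proof.
intros Hm Hml1 Hl2 HG HFG Hl.
replace (F / l1 - G / l2) with ((F - G) / l1 + (G / l2) * ((l2 - l1) / l1)) by (field; lra).
assert (Hq : 0 <= G / l2 <= 1).
{ split; [apply Rmult_le_pos; [lra | left; apply Rinv_0_lt_compat, Hl2] |].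
  apply (Rmult_le_reg_r l2); [exact Hl2 |]. unfold Rdiv. rewrite Rmult_assoc, Rinv_l; lra. }
assert (H1 : Rabs ((F - G) / l1) <= C / m) by (apply Rabs_div_le; lra).
assert (H2 : Rabs ((l2 - l1) / l1) <= C / m)
  by (apply Rabs_div_le; try lra; rewrite Rabs_minus_sym; exact Hl).
eapply Rle_trans; [apply Rabs_triang |]. rewrite Rabs_mult, (Rabs_right (G / l2)) by lra.
assert (G / l2 * Rabs ((l2 - l1) / l1) <= C / m).
{ rewrite <- (Rmult_1_l (C / m)). apply Rmult_le_compat; try lra. apply Rabs_pos. }
replace (2 * C / m) with (C / m + C / m) by (field; lra). lra.
Qed.

Lemma Rabs_Rmax_sub_le s z c : Rabs (Rmax s c - Rmax z c) <= Rabs (s - z).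
Proof.
unfold Rmax; destruct (Rle_dec s c), (Rle_dec z c); unfold Rabs; repeat destruct Rcase_abs; lra.
Qed.

Lemma Rpower_opp_succ s p : 0 < s -> Rpower s (-(p + 1)) = / (s * Rpower s p).
Proof.
intros Hs. rewrite Rpower_Ropp, Rpower_plus, Rpower_1 by exact Hs. apply f_equal, Rmult_comm.
Qed.

Lemma Rpower_opp_sub s p q : Rpower s (-(p - q)) = Rpower s q / Rpower s p.
Proof.
replace (-(p - q)) with (q + - p) by ring. rewrite Rpower_plus, Rpower_Ropp. reflexivity.
Qed.

(* Below [a0] the profiles are frozen at their value in [a0], so that the integrands are
   continuous on the whole line while [L] and [N] are only continuous on [a0, +oo). *)
Definition nl_ratio a0 (L N : R -> R) s := N (Rmax s a0) / L (Rmax s a0).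
Definition nl_integral a0 L N x := RInt (nl_ratio a0 L N) a0 x.
Definition e2_ext a a0 L N x := exp (- (a0 * a * nl_integral a0 L N x)).
Definition f2_integrand a a0 L N s := e2_ext a a0 L N s / (Rmax s a0 * L (Rmax s a0)).

Lemma F2_as_RInt a LS NS a0 f x : a0 <= x ->
  F2 a LS NS a0 x f = RInt (f2_integrand a a0 (LS f) (NS f)) a0 x.
Proof.
intros Hx. apply RInt_ext. intros t Ht. rewrite Rmin_left, Rmax_right in Ht by lra.
unfold f2_integrand, e2_ext, E2, nl_integral. rewrite Rmax_left by lra. do 4 f_equal.
apply RInt_ext. intros u Hu. rewrite Rmin_left, Rmax_right in Hu by lra.
unfold nl_ratio. rewrite Rmax_left by lra. reflexivity.
Qed.

Lemma continuous_frozen a0 f : contOn a0 f -> forall z, continuous (fun s => f (Rmax s a0)) z.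
Proof.
intros Hf z. eapply filterlim_comp; [| apply Hf, Rmax_r].
intros P [eps HP]. exists eps. intros s Hs. apply HP; [| apply Rmax_r].
eapply Rle_lt_trans; [apply Rabs_Rmax_sub_le | exact Hs].
Qed.

Definition ratio_integral_bound beta sigma L2m N2M a0 :=
  N2M / L2m / ((beta - sigma - 1) * Rpower a0 (beta - sigma - 1)).

Section Profile.

Variables (a a0 beta sigma L2m L2M N2M : R) (L N : R -> R).
Hypotheses (ha : 0 < a) (ha0 : 0 < a0) (hbeta : 0 < beta) (hbs : sigma + 1 < beta)
  (hL2m : 0 < L2m) (hLc : contOn a0 L) (hNc : contOn a0 N)
  (hNpos : forall x, a0 <= x -> 0 < N x)
  (hLlow : forall x, a0 <= x -> L2m * Rpower x beta <= L x)
  (hNup : forall x, a0 <= x -> N x <= N2M * Rpower x sigma)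
  (hLup : forall x, a0 <= x -> L x <= L2M * Rpower x beta).

Lemma L_pos x : a0 <= x -> 0 < L x.
Proof.
intros Hx. eapply Rlt_le_trans; [| exact (hLlow x Hx)].
apply Rmult_lt_0_compat; [exact hL2m | apply Rpower_pos].
Qed.

Lemma continuous_nl_ratio z : continuous (nl_ratio a0 L N) z.
Proof.
apply (continuous_mult (fun s => N (Rmax s a0)) (fun s => / L (Rmax s a0))).
- apply continuous_frozen, hNc.
- apply continuous_Rinv_comp; [apply continuous_frozen, hLc |].
  apply Rgt_not_eq, L_pos, Rmax_r.
Qed.

Lemma ex_RInt_nl_ratio x y : ex_RInt (nl_ratio a0 L N) x y.
Proof.
apply (ex_RInt_continuous (V:=R_CompleteNormedModule)). intros; apply continuous_nl_ratio.
Qed.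

Lemma continuous_f2_integrand z : continuous (f2_integrand a a0 L N) z.
Proof.
assert (Hint : continuous (nl_integral a0 L N) z).
{ apply (continuous_RInt_1 (V:=R_NormedModule) (nl_ratio a0 L N) a0 z).
  apply filter_forall. intros y.
  apply (RInt_correct (V:=R_CompleteNormedModule)), ex_RInt_nl_ratio. }
apply (continuous_mult (e2_ext a a0 L N) (fun s => / (Rmax s a0 * L (Rmax s a0)))).
- apply continuous_exp_comp, (continuous_opp (V:=R_NormedModule) (fun s => a0 * a * _)).
  apply (continuous_mult (fun _ => a0 * a)); [apply continuous_const | exact Hint].
- apply continuous_Rinv_comp.
  + apply (continuous_mult (fun s => Rmax s a0) (fun s => L (Rmax s a0)));
      [apply (continuous_frozen a0 (fun s => s)) | apply continuous_frozen, hLc].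
    intros x _ P [eps HP]. exists eps. intros y Hy _. apply HP, Hy.
  + pose proof (L_pos _ (Rmax_r z a0)); pose proof (Rmax_r z a0).
    apply Rgt_not_eq, Rmult_lt_0_compat; lra.
Qed.

Lemma ex_RInt_f2_integrand x y : ex_RInt (f2_integrand a a0 L N) x y.
Proof.
apply (ex_RInt_continuous (V:=R_CompleteNormedModule)). intros; apply continuous_f2_integrand.
Qed.

Let K := ratio_integral_bound beta sigma L2m N2M a0.
Let c := exp (- (a0 * a * K)) / L2M.

Lemma N2M_pos : 0 < N2M.
Proof.
pose proof (hNpos a0 (Rle_refl a0)); pose proof (hNup a0 (Rle_refl a0)).
pose proof (Rpower_pos a0 sigma). nra.
Qed.

Lemma L2M_pos : 0 < L2M.
Proof.
pose proof (hLup a0 (Rle_refl a0)); pose proof (L_pos a0 (Rle_refl a0)).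
pose proof (Rpower_pos a0 beta). nra.
Qed.

Lemma nl_ratio_bounds s : a0 <= s ->
  0 <= nl_ratio a0 L N s <= N2M / L2m * Rpower s (-((beta - sigma - 1) + 1)).
Proof.
intros Hs. unfold nl_ratio. rewrite Rmax_left by lra.
pose proof (L_pos s Hs); pose proof (hNpos s Hs); pose proof (hLlow s Hs); pose proof (hNup s Hs).
pose proof (Rpower_pos s beta); pose proof (Rpower_pos s sigma); pose proof N2M_pos.
replace (-((beta - sigma - 1) + 1)) with (-(beta - sigma)) by ring. rewrite Rpower_opp_sub.
split; [apply Rmult_le_pos; [lra | left; apply Rinv_0_lt_compat; lra] |].
apply Rle_trans with (N2M * Rpower s sigma / (L2m * Rpower s beta)); [| right; field; lra].
unfold Rdiv. apply Rmult_le_compat; try lra; [left; apply Rinv_0_lt_compat; lra |].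
apply Rinv_le_contravar; nra.
Qed.

Lemma nl_integral_bounds x : a0 <= x -> 0 <= nl_integral a0 L N x <= K.
Proof.
intros Hx. split.
- apply RInt_ge_0; [exact Hx | apply ex_RInt_nl_ratio |].
  intros s Hs. apply nl_ratio_bounds. lra.
- eapply Rle_trans; [apply Rle_abs |].
  apply abs_RInt_le_Rpower_tail; try lra; [| apply ex_RInt_nl_ratio |].
  + pose proof N2M_pos. apply Rmult_le_pos; [lra | left; apply Rinv_0_lt_compat, hL2m].
  + intros s Hs. destruct (nl_ratio_bounds s) as [H0 H1]; [lra |].
    rewrite Rabs_right; lra.
Qed.

Lemma e2_ext_bounds x : a0 <= x -> exp (- (a0 * a * K)) <= e2_ext a a0 L N x <= 1.
Proof.
intros Hx. destruct (nl_integral_bounds x Hx). assert (0 < a0 * a) by nra.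
unfold e2_ext. rewrite <- exp_0. split; apply exp_le_exp; nra.
Qed.

Lemma f2_integrand_bounds s : a0 <= s ->
  c * Rpower s (-(beta + 1)) <= f2_integrand a a0 L N s
  <= / L2m * Rpower s (-(beta + 1)).
Proof.
intros Hs. destruct (e2_ext_bounds s Hs) as [E0 E1]. pose proof (exp_pos (- (a0 * a * K))).
unfold f2_integrand. rewrite Rmax_left, Rpower_opp_succ by lra.
pose proof (L_pos s Hs); pose proof (hLlow s Hs); pose proof (hLup s Hs).
pose proof (Rpower_pos s beta); pose proof L2M_pos. assert (Hs0 : 0 < s) by lra.
assert (0 < L2m * Rpower s beta) by (apply Rmult_lt_0_compat; lra).
split.
- unfold c. apply Rle_trans with (exp (- (a0 * a * K)) / (s * (L2M * Rpower s beta)));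
    [right; field; repeat split; lra |].
  unfold Rdiv. apply Rmult_le_compat; try lra;
    [left; apply Rinv_0_lt_compat; nra | apply Rinv_le_contravar; nra].
- apply Rle_trans with (1 / (s * (L2m * Rpower s beta))); [| right; field; repeat split; lra].
  unfold Rdiv. apply Rmult_le_compat; try lra; [left; apply Rinv_0_lt_compat; nra |].
  apply Rinv_le_contravar; [| apply Rmult_le_compat_l]; nra.
Qed.

Lemma f2_integrand_nonneg s : a0 <= s -> 0 <= f2_integrand a a0 L N s.
Proof.
intros Hs. destruct (f2_integrand_bounds s Hs) as [Hlow _].
eapply Rle_trans; [| exact Hlow]. pose proof (Rpower_pos s (-(beta + 1))).
apply Rmult_le_pos; [apply Rlt_le, Rdiv_lt_0_compat; [apply exp_pos | apply L2M_pos] | lra].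
Qed.

Lemma RInt_f2_integrand_incr x y : a0 <= x -> x <= y ->
  RInt (f2_integrand a a0 L N) a0 x <= RInt (f2_integrand a a0 L N) a0 y.
Proof.
intros Hx Hxy.
rewrite <- (RInt_Chasles (V:=R_CompleteNormedModule) _ a0 x y) by apply ex_RInt_f2_integrand.
assert (0 <= RInt (f2_integrand a a0 L N) x y).
{ apply RInt_ge_0; [exact Hxy | apply ex_RInt_f2_integrand |].
  intros s Hs. apply f2_integrand_nonneg. lra. }
change (plus ?u ?v) with (u + v). lra.
Qed.

Lemma RInt_f2_integrand_le x : a0 <= x ->
  RInt (f2_integrand a a0 L N) a0 x <= / L2m / (beta * Rpower a0 beta).
Proof.
intros Hx. eapply Rle_trans; [apply Rle_abs |].
apply abs_RInt_le_Rpower_tail; try lra;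
  [left; apply Rinv_0_lt_compat, hL2m | apply ex_RInt_f2_integrand |].
intros s Hs. rewrite Rabs_right by (apply Rle_ge, f2_integrand_nonneg; lra).
apply f2_integrand_bounds. lra.
Qed.

Lemma RInt_f2_integrand_ge x : a0 <= x ->
  c / (beta * Rpower a0 beta) - c / beta * Rpower x (-beta)
  <= RInt (f2_integrand a a0 L N) a0 x.
Proof.
intros Hx.
assert (HI : is_RInt (fun s => c * Rpower s (-(beta + 1))) a0 x
               (c * ((/ Rpower a0 beta - / Rpower x beta) / beta)))
  by (apply (is_RInt_scal (fun s => Rpower s _)), is_RInt_Rpower_tail; assumption).
apply Rle_trans with (RInt (fun s => c * Rpower s (-(beta + 1))) a0 x).
- rewrite (is_RInt_unique _ _ _ _ HI), Rpower_Ropp.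
  pose proof (Rpower_pos a0 beta); pose proof (Rpower_pos x beta). right. field. lra.
- apply RInt_le; [exact Hx | eexists; exact HI | apply ex_RInt_f2_integrand |].
  intros s Hs. apply f2_integrand_bounds. lra.
Qed.

Lemma RInt_f2_integrand_limit : exists l : R,
  is_lim (fun x => RInt (f2_integrand a a0 L N) a0 x) p_infty l
  /\ (forall x, a0 <= x -> 0 <= RInt (f2_integrand a a0 L N) a0 x <= l)
  /\ c / (beta * Rpower a0 beta) <= l.
Proof.
destruct (is_lim_incr_bounded _ a0 _ RInt_f2_integrand_incr RInt_f2_integrand_le)
  as [l [Hlim Hle]].
exists l. split; [exact Hlim | split].
- intros x Hx. split; [| apply Hle, Hx].
  apply RInt_ge_0; [exact Hx | apply ex_RInt_f2_integrand |].
  intros s Hs. apply f2_integrand_nonneg. lra.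
- apply (le_lim_of_Rpower_gap _ (c / beta) beta l a0 hbeta).
  intros x Hx. eapply Rle_trans; [apply RInt_f2_integrand_ge, Hx | apply Hle, Hx].
Qed.

End Profile.

Definition ratio_gap_bound beta sigma L2m N2M bL bN d a0 :=
  bN * d / L2m / ((beta - 1) * Rpower a0 (beta - 1))
  + N2M * bL * d / L2m ^ 2 / ((2 * beta - sigma - 1) * Rpower a0 (2 * beta - sigma - 1)).

Definition f2_gap_bound a beta sigma L2m N2M bL bN d a0 :=
  a0 * a * ratio_gap_bound beta sigma L2m N2M bL bN d a0 / L2m / (beta * Rpower a0 beta)
  + bL * d / L2m ^ 2 / (2 * beta * Rpower a0 (2 * beta)).

Section Gap.

Variables (a a0 beta sigma L2m N2M bL bN d : R) (L1 N1 L2 N2 : R -> R).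
Hypotheses (ha : 0 < a) (ha0 : 0 < a0) (hbeta : 1 < beta) (hbs : sigma + 1 < beta)
  (hL2m : 0 < L2m) (hbL : 0 <= bL) (hbN : 0 <= bN) (hd : 0 <= d)
  (hL1c : contOn a0 L1) (hN1c : contOn a0 N1) (hL2c : contOn a0 L2) (hN2c : contOn a0 N2)
  (hN1pos : forall x, a0 <= x -> 0 < N1 x) (hN2pos : forall x, a0 <= x -> 0 < N2 x)
  (hL1low : forall x, a0 <= x -> L2m * Rpower x beta <= L1 x)
  (hL2low : forall x, a0 <= x -> L2m * Rpower x beta <= L2 x)
  (hN1up : forall x, a0 <= x -> N1 x <= N2M * Rpower x sigma)
  (hN2up : forall x, a0 <= x -> N2 x <= N2M * Rpower x sigma)
  (hdL : forall x, a0 <= x -> Rabs (L1 x - L2 x) <= bL * d)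
  (hdN : forall x, a0 <= x -> Rabs (N1 x - N2 x) <= bN * d).

Let D := ratio_gap_bound beta sigma L2m N2M bL bN d a0.

Lemma nl_ratio_gap s : a0 <= s ->
  Rabs (nl_ratio a0 L1 N1 s - nl_ratio a0 L2 N2 s)
  <= bN * d / L2m * Rpower s (-((beta - 1) + 1))
     + N2M * bL * d / L2m ^ 2 * Rpower s (-((2 * beta - sigma - 1) + 1)).
Proof.
intros Hs. unfold nl_ratio. rewrite !Rmax_left by lra.
pose proof (Rpower_pos s beta); pose proof (Rpower_pos s sigma).
assert (Hm : 0 < L2m * Rpower s beta) by (apply Rmult_lt_0_compat; lra).
pose proof (hL1low s Hs); pose proof (hL2low s Hs).
pose proof (hN2pos s Hs); pose proof (hN2up s Hs).
replace (N1 s / L1 s - N2 s / L2 s)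
  with ((N1 s - N2 s) / L1 s + N2 s * (L2 s - L1 s) / (L1 s * L2 s)) by (field; lra).
replace (-((beta - 1) + 1)) with (-(beta - 0)) by ring.
replace (-((2 * beta - sigma - 1) + 1)) with (-((beta + beta) - sigma)) by ring.
rewrite !Rpower_opp_sub, Rpower_plus, Rpower_O by exact (Rlt_le_trans _ _ _ ha0 Hs).
eapply Rle_trans; [apply Rabs_triang | apply Rplus_le_compat].
- eapply Rle_trans; [apply (Rabs_div_le _ _ (L2m * Rpower s beta) (bN * d)); auto; lra |].
  right. field. lra.
- eapply Rle_trans.
  { apply (Rabs_div_le _ _ ((L2m * Rpower s beta) * (L2m * Rpower s beta))
             (N2M * Rpower s sigma * (bL * d))); [nra | apply Rmult_le_compat; lra |].
    rewrite Rabs_mult, (Rabs_right (N2 s)) by lra.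
    apply Rmult_le_compat; try lra; [apply Rabs_pos |].
    rewrite Rabs_minus_sym. apply hdL, Hs. }
  right. field. lra.
Qed.

Lemma nl_integral_gap x : a0 <= x ->
  Rabs (nl_integral a0 L1 N1 x - nl_integral a0 L2 N2 x) <= D.
Proof.
intros Hx. unfold nl_integral.
pose proof (ex_RInt_nl_ratio a0 beta L2m L1 N1 hL2m hL1c hN1c hL1low a0 x) as I1.
pose proof (ex_RInt_nl_ratio a0 beta L2m L2 N2 hL2m hL2c hN2c hL2low a0 x) as I2.
rewrite <- (RInt_minus (V:=R_CompleteNormedModule)) by assumption.
pose proof (N2M_pos a0 sigma N2M N1 hN1pos hN1up).
apply abs_RInt_le_Rpower_tails; try lra.
- apply Rmult_le_pos; [apply Rmult_le_pos | left; apply Rinv_0_lt_compat]; lra.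
- apply Rmult_le_pos; [repeat apply Rmult_le_pos | left; apply Rinv_0_lt_compat, pow_lt]; lra.
- apply (ex_RInt_minus (V:=R_NormedModule)); assumption.
- intros s Hs. apply nl_ratio_gap. lra.
Qed.

Lemma e2_ext_gap x : a0 <= x ->
  Rabs (e2_ext a a0 L1 N1 x - e2_ext a a0 L2 N2 x) <= a0 * a * D.
Proof.
intros Hx. assert (Ha0a : 0 < a0 * a) by nra.
destruct (nl_integral_bounds a0 beta sigma L2m N2M L1 N1) with (x := x) as [G1 _]; auto.
destruct (nl_integral_bounds a0 beta sigma L2m N2M L2 N2) with (x := x) as [G2 _]; auto.
unfold e2_ext. eapply Rle_trans; [apply exp_opp_lipschitz; nra |].
rewrite <- Rmult_minus_distr_l, Rabs_mult, (Rabs_right (a0 * a)) by lra.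
apply Rmult_le_compat_l; [lra | apply nl_integral_gap, Hx].
Qed.

Lemma f2_integrand_gap s : a0 <= s ->
  Rabs (f2_integrand a a0 L1 N1 s - f2_integrand a a0 L2 N2 s)
  <= a0 * a * D / L2m * Rpower s (-(beta + 1))
     + bL * d / L2m ^ 2 * Rpower s (-((2 * beta) + 1)).
Proof.
intros Hs. assert (Hs0 : 0 < s) by lra.
destruct (e2_ext_bounds a a0 beta sigma L2m N2M L2 N2) with (x := s) as [E20 E21]; auto; try lra.
pose proof (exp_pos (- (a0 * a * ratio_integral_bound beta sigma L2m N2M a0))).
unfold f2_integrand. rewrite !Rmax_left, !Rpower_opp_succ by lra.
replace (2 * beta) with (beta + beta) by ring. rewrite Rpower_plus.
set (E1 := e2_ext a a0 L1 N1 s) in *. set (E2 := e2_ext a a0 L2 N2 s) in *.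
pose proof (Rpower_pos s beta).
assert (Hm : 0 < L2m * Rpower s beta) by (apply Rmult_lt_0_compat; lra).
pose proof (hL1low s Hs); pose proof (hL2low s Hs).
replace (E1 / (s * L1 s) - E2 / (s * L2 s))
  with ((E1 - E2) / (s * L1 s) + E2 * (L2 s - L1 s) / (s * (L1 s * L2 s)))
  by (field; repeat split; lra).
eapply Rle_trans; [apply Rabs_triang | apply Rplus_le_compat].
- eapply Rle_trans.
  { apply (Rabs_div_le _ _ (s * (L2m * Rpower s beta)) (a0 * a * D));
      [apply Rmult_lt_0_compat; lra | apply Rmult_le_compat_l; lra |].
    apply e2_ext_gap, Hs. }
  right. field. lra.
- eapply Rle_trans.
  { apply (Rabs_div_le _ _ (s * ((L2m * Rpower s beta) * (L2m * Rpower s beta)))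
             (1 * (bL * d)));
      [repeat apply Rmult_lt_0_compat; lra
      | apply Rmult_le_compat_l; [lra | apply Rmult_le_compat; lra] |].
    rewrite Rabs_mult, (Rabs_right E2) by lra.
    apply Rmult_le_compat; try lra; [apply Rabs_pos |].
    rewrite Rabs_minus_sym. apply hdL, Hs. }
  right. field. lra.
Qed.

Lemma RInt_f2_integrand_gap x : a0 <= x ->
  Rabs (RInt (f2_integrand a a0 L1 N1) a0 x - RInt (f2_integrand a a0 L2 N2) a0 x)
  <= f2_gap_bound a beta sigma L2m N2M bL bN d a0.
Proof.
intros Hx.
pose proof (ex_RInt_f2_integrand a a0 beta L2m L1 N1 ha0 hL2m hL1c hN1c hL1low a0 x) as I1.
pose proof (ex_RInt_f2_integrand a a0 beta L2m L2 N2 ha0 hL2m hL2c hN2c hL2low a0 x) as I2.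
rewrite <- (RInt_minus (V:=R_CompleteNormedModule)) by assumption.
assert (HD : 0 <= D)
  by (eapply Rle_trans; [apply Rabs_pos | apply (nl_integral_gap a0 (Rle_refl a0))]).
apply abs_RInt_le_Rpower_tails; try lra.
- apply Rmult_le_pos; [apply Rmult_le_pos; [apply Rmult_le_pos; lra | exact HD] |].
  left; apply Rinv_0_lt_compat, hL2m.
- apply Rmult_le_pos; [apply Rmult_le_pos | left; apply Rinv_0_lt_compat, pow_lt]; lra.
- apply (ex_RInt_minus (V:=R_NormedModule)); assumption.
- intros s Hs. apply f2_integrand_gap. lra.
Qed.

End Gap.

Lemma F2inf_spec a a0 beta sigma L2m L2M N2M LS NS f :
  0 < a -> 0 < a0 -> 0 < beta -> sigma + 1 < beta -> 0 < L2m ->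
  contOn a0 (LS f) -> contOn a0 (NS f) -> (forall x, a0 <= x -> 0 < NS f x) ->
  (forall x, a0 <= x -> L2m * Rpower x beta <= LS f x) ->
  (forall x, a0 <= x -> NS f x <= N2M * Rpower x sigma) ->
  (forall x, a0 <= x -> LS f x <= L2M * Rpower x beta) ->
  is_lim (fun x => F2 a LS NS a0 x f) p_infty (F2inf a LS NS a0 f)
  /\ (forall x, a0 <= x -> 0 <= F2 a LS NS a0 x f <= F2inf a LS NS a0 f)
  /\ exp (- (a0 * a * ratio_integral_bound beta sigma L2m N2M a0)) / L2M
       / (beta * Rpower a0 beta) <= F2inf a LS NS a0 f.
Proof.
intros ha ha0 hbeta hbs hL2m hLc hNc hNpos hLlow hNup hLup.
destruct (RInt_f2_integrand_limit a a0 beta sigma L2m L2M N2M (LS f) (NS f))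
  as [l [Hlim [Hbd Hlow]]]; auto.
assert (HlimF : is_lim (fun x => F2 a LS NS a0 x f) p_infty l).
{ apply (is_lim_ext_loc (fun x => RInt (f2_integrand a a0 (LS f) (NS f)) a0 x));
    [| exact Hlim].
  exists a0. intros x Hx. symmetry. apply F2_as_RInt. lra. }
assert (Hl : F2inf a LS NS a0 f = l)
  by (unfold F2inf; rewrite (is_lim_unique _ _ _ HlimF); reflexivity).
rewrite Hl. split; [exact HlimF | split; [| exact Hlow]].
intros x Hx. rewrite F2_as_RInt by exact Hx. apply Hbd, Hx.
Qed.

Lemma phihat_eq a beta sigma L2m L2M N2M barL2 barN2 a0 d :
  0 < a0 -> 0 < L2m -> 0 < L2M -> 1 < beta -> sigma + 1 < beta ->
  2 * f2_gap_bound a beta sigma L2m N2M barL2 barN2 d a0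
  / (exp (- (a0 * a * ratio_integral_bound beta sigma L2m N2M a0)) / L2M
     / (beta * Rpower a0 beta))
  = phihat a beta sigma L2m L2M N2M barL2 barN2 a0 * d.
Proof.
intros ha0 hL2m hL2M hbeta hbs.
assert (HK : a0 * a * ratio_integral_bound beta sigma L2m N2M a0
             = a * N2M / (L2m * (beta - sigma - 1)) * / Rpower a0 (beta - sigma - 2)).
{ unfold ratio_integral_bound.
  replace (beta - sigma - 1) with ((beta - sigma - 2) + 1) at 2 by ring.
  rewrite Rpower_plus, Rpower_1 by lra. pose proof (Rpower_pos a0 (beta - sigma - 2)).
  field. repeat split; lra. }
unfold phihat, f2_gap_bound, ratio_gap_bound, barF2. rewrite HK, exp_Ropp.
pose proof (exp_pos (a * N2M / (L2m * (beta - sigma - 1)) * / Rpower a0 (beta - sigma - 2))).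
pose proof (Rpower_pos a0 beta); pose proof (Rpower_pos a0 (beta - 1)).
pose proof (Rpower_pos a0 (2 * beta - sigma - 1)); pose proof (Rpower_pos a0 (2 * beta)).
field. repeat split; lra.
Qed.

Lemma supnorm_le a0 h B : (forall x, a0 <= x -> Rabs (h x) <= B) -> supnorm a0 h <= B.
Proof.
intros H. unfold supnorm.
set (S := fun y => exists x, a0 <= x /\ y = Rabs (h x)).
destruct (Lub_Rbar_correct S) as [Hub Hleast].
assert (Hb : Rbar_le (Lub_Rbar S) (Finite B)) by (apply Hleast; intros y [x [Hx ->]]; apply H, Hx).
assert (He : Rbar_le (Finite (Rabs (h a0))) (Lub_Rbar S)) by (apply Hub; exists a0; split; lra).
destruct (Lub_Rbar S); simpl in *; auto; contradiction.
Qed.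

Lemma supnorm_nonneg a0 h : 0 <= supnorm a0 h.
Proof.
unfold supnorm.
set (S := fun y => exists x, a0 <= x /\ y = Rabs (h x)).
destruct (Lub_Rbar_correct S) as [Hub _].
assert (He : Rbar_le (Finite (Rabs (h a0))) (Lub_Rbar S)) by (apply Hub; exists a0; split; lra).
pose proof (Rabs_pos (h a0)).
destruct (Lub_Rbar S); simpl in *; try lra; contradiction.
Qed.

Theorem lemma4
  (a beta sigma L2m L2M N2m N2M barL2 barN2 a0 : R)
  (LS NS : (R -> R) -> (R -> R))
  (ha : 0 < a) (ha0 : 0 < a0)
  (hbeta : 0 < beta) (hsigma : 0 < sigma)
  (hL2m : 0 < L2m) (hL2M : 0 < L2M) (hN2m : 0 < N2m) (hN2M : 0 < N2M)
  (hbs : beta > sigma + 2)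
  (hbarL2 : 0 <= barL2) (hbarN2 : 0 <= barN2)
  (hLcont : forall f2, inM a0 f2 -> contOn a0 (LS f2))
  (hNcont : forall f2, inM a0 f2 -> contOn a0 (NS f2))
  (hLpos : forall f2, inM a0 f2 -> forall xi, a0 <= xi -> 0 < LS f2 xi)
  (hNpos : forall f2, inM a0 f2 -> forall xi, a0 <= xi -> 0 < NS f2 xi)
  (H1L : forall f2, inM a0 f2 -> forall xi, a0 <= xi ->
           L2m * Rpower xi beta <= LS f2 xi /\ LS f2 xi <= L2M * Rpower xi beta)
  (H1N : forall f2, inM a0 f2 -> forall xi, a0 <= xi ->
           N2m * Rpower xi sigma <= NS f2 xi /\ NS f2 xi <= N2M * Rpower xi sigma)
  (H2L : forall f2 f2s, inM a0 f2 -> inM a0 f2s ->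
           forall s, a0 <= s ->
           Rabs (LS f2 s - LS f2s s) <= barL2 * supnorm a0 (fun s => f2 s - f2s s))
  (H2N : forall f2 f2s, inM a0 f2 -> inM a0 f2s ->
           forall s, a0 <= s ->
           Rabs (NS f2 s - NS f2s s) <= barN2 * supnorm a0 (fun s => f2 s - f2s s))
  (f2 f2s : R -> R) (hf2 : inM a0 f2) (hf2s : inM a0 f2s) :
  supnorm a0 (fun xi => W a LS NS a0 f2 xi - W a LS NS a0 f2s xi)
    <= phihat a beta sigma L2m L2M N2M barL2 barN2 a0
       * supnorm a0 (fun xi => f2 xi - f2s xi).
Proof.
set (d := supnorm a0 (fun xi => f2 xi - f2s xi)).
set (C := f2_gap_bound a beta sigma L2m N2M barL2 barN2 d a0).
set (m := exp (- (a0 * a * ratio_integral_bound beta sigma L2m N2M a0)) / L2M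
          / (beta * Rpower a0 beta)).
assert (Hd : 0 <= d) by apply supnorm_nonneg.
assert (Hm : 0 < m).
{ pose proof (Rpower_pos a0 beta).
  repeat apply Rdiv_lt_0_compat; try apply Rmult_lt_0_compat; try apply exp_pos; lra. }
assert (hbs1 : sigma + 1 < beta) by lra.
assert (hLlow : forall f, inM a0 f -> forall x, a0 <= x -> L2m * Rpower x beta <= LS f x)
  by (intros f hf x Hx; apply (H1L f hf x Hx)).
assert (hLup : forall f, inM a0 f -> forall x, a0 <= x -> LS f x <= L2M * Rpower x beta)
  by (intros f hf x Hx; apply (H1L f hf x Hx)).
assert (hNup : forall f, inM a0 f -> forall x, a0 <= x -> NS f x <= N2M * Rpower x sigma)
  by (intros f hf x Hx; apply (H1N f hf x Hx)).
destruct (F2inf_spec a a0 beta sigma L2m L2M N2M LS NS f2 ha ha0 hbeta hbs1 hL2m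
            (hLcont f2 hf2) (hNcont f2 hf2) (hNpos f2 hf2) (hLlow f2 hf2) (hNup f2 hf2)
            (hLup f2 hf2))
  as [Hlim1 [_ Hlow1]].
destruct (F2inf_spec a a0 beta sigma L2m L2M N2M LS NS f2s ha ha0 hbeta hbs1 hL2m
            (hLcont f2s hf2s) (hNcont f2s hf2s) (hNpos f2s hf2s) (hLlow f2s hf2s) (hNup f2s hf2s)
            (hLup f2s hf2s))
  as [Hlim2 [Hb2 Hlow2]].
assert (HF : forall x, a0 <= x -> Rabs (F2 a LS NS a0 x f2 - F2 a LS NS a0 x f2s) <= C).
{ intros x Hx. rewrite !F2_as_RInt by exact Hx.
  apply RInt_f2_integrand_gap; auto; try lra. }
assert (Hl := abs_lim_minus_le _ _ _ _ a0 C Hlim1 Hlim2 HF).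
rewrite <- phihat_eq by lra. fold C m.
apply supnorm_le. intros xi Hxi. unfold W.
assert (Hopp : forall u v : R, - u - - v = - (u - v)) by (intros; ring).
rewrite Hopp, Rabs_Ropp.
apply Rabs_ratio_diff_le; [exact Hm | exact Hlow1 | exact (Rlt_le_trans _ _ _ Hm Hlow2)
                          | apply Hb2, Hxi | apply HF, Hxi | exact Hl].
Qed.
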